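(* Let $\Omega\subset\mathbb{R}^n$ be an open bounded connected domain, let $\rho_\Omega=\max_{\overline\Omega}d_{\partial\Omega}$, and fix $x_0\in\Omega$ with $d_{\partial\Omega}(x_0)=\rho_\Omega$. Then the function $$v(x)=c_0\left[\rho_\Omega^{4/3}-|x-x_0|^{4/3}\right],\qquad c_0=\frac{3^{4/3}}{4},\quad x\in\Omega,$$ (that is, $v(x)=g(\rho_\Omega-|x-x_0|)$ with $g(t)=c_0[\rho_\Omega^{4/3}-(\rho_\Omega-t)^{4/3}]$) is a viscosity solution of $-\Delta_\infty v=1$ in $\Omega$.
   Context: $d_{\partial\Omega}(x)=\min_{y\in\partial\Omega}|x-y|$. $\Delta_\infty\varphi=\langle D^2\varphi\,\nabla\varphi,\nabla\varphi\rangle$. A function $v\in C^0(\Omega)$ is a viscosity solution of $-\Delta_\infty v=1$ if: whenever $\varphi\in C^2(\Omega)$ and $\varphi-v$ has a local minimum at $y$, then $-\Delta_\infty\varphi(y)\le1$; and whenever $\varphi\in C^2(\Omega)$ and $\varphi-v$ has a local maximum at $y$, then $-\Delta_\infty\varphi(y)\ge1$. *)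

From HB Require Import structures.
From mathcomp Require Import all_boot all_order all_algebra.
From mathcomp Require Import all_classical all_reals all_analysis.
Set Implicit Arguments. Unset Strict Implicit. Unset Printing Implicit Defensive.
Import Order.TTheory GRing.Theory Num.Theory.
Import numFieldNormedType.Exports.
Local Open Scope classical_set_scope.
Local Open Scope ring_scope.

Section Defs.
Context {R : realType} {n : nat}.
Local Notation V := 'rV[R]_n.

Definition enorm (x : V) : R := Num.sqrt (\sum_(i < n) (x ord0 i) ^+ 2).

Definition ebasis (i : 'I_n) : V := delta_mx 0 i.

Definition partial (i : 'I_n) (f : V -> R) (x : V) : R := 'D_(ebasis i) f x.

Definition bdry (O : set V) : set V := closure O `\` interior O.

Definition dist_bd (O : set V) (x : V) : R :=
  inf [set enorm (x - y) | y in bdry O].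

Definition rho (O : set V) : R := sup [set dist_bd O y | y in closure O].

Definition C2_on (O : set V) (phi : V -> R) : Prop :=
  {within O, continuous phi} /\
  forall i : 'I_n,
    (forall x, O x -> derivable phi x (ebasis i)) /\
    {within O, continuous (partial i phi)} /\
    forall j : 'I_n,
      (forall x, O x -> derivable (partial i phi) x (ebasis j)) /\
      {within O, continuous (partial j (partial i phi))}.

Definition inf_laplacian (phi : V -> R) (y : V) : R :=
  \sum_(i < n) \sum_(j < n)
    partial j (partial i phi) y * partial i phi y * partial j phi y.

Definition visc_solution (O : set V) (v : V -> R) : Prop :=
  {within O, continuous v} /\
  (forall (phi : V -> R) (y : V), O y -> C2_on O phi ->
     (\forall x \near y, phi y - v y <= phi x - v x) ->
     - inf_laplacian phi y <= 1) /\
  (forall (phi : V -> R) (y : V), O y -> C2_on O phi ->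
     (\forall x \near y, phi x - v x <= phi y - v y) ->
     1 <= - inf_laplacian phi y).

End Defs.

From HB Require Import structures.
From mathcomp Require Import all_boot all_order all_algebra.
From mathcomp Require Import all_classical all_reals all_analysis.
From mathcomp Require Import ring lra.
Import Order.TTheory GRing.Theory Num.Theory.
Import numFieldNormedType.Exports.
Local Open Scope classical_set_scope.
Local Open Scope ring_scope.
Set Implicit Arguments. Unset Strict Implicit. Unset Printing Implicit Defensive.

(* Away from x0 the function v is smooth.  If a C^2 function phi touches v from
   below (above) at y <> x0, then restricting phi - v to the coordinate lines
   through y shows grad phi(y) = grad v(y) =: g, and restricting it to the line
   y + t g shows that the second derivative of phi along g, which is
   Delta_oo phi(y), is >= (<=) that of v, which is Delta_oo v(y) = -1 because
   c0^3 = 81/64.  At x0 a test function touching from below has zero gradient,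
   hence Delta_oo phi(x0) = 0, and none can touch from above, since
   v(x0) - v(x) = c0 |x - x0|^(4/3) dominates every quadratic near x0.
   Only partial derivatives are available for test functions, so directional
   derivatives are recovered from the continuity of the partials.
   Neither the shape of Omega nor the choice of x0 and of the constant
   rho^(4/3) plays any role. *)

Section RealCalculus.
Context {R : realType}.
Implicit Types (f df : R -> R) (a b c d s M : R).

Lemma is_derive_local_min f a d :
  is_derive a 1 f d -> (\forall t \near a, f a <= f t) -> d = 0.
Proof.
move=> [fdrv <-] amin.
set q := fun h : R => h^-1 *: ((f \o shift a) (h *: 1) - f a).
have qcvg : forall P, P `<=` (fun h : R => h != 0) -> cvg (q @ within P (nbhs 0)).
  move=> P P0; apply/cvg_ex; exists ('D_1 f a).
  exact: cvg_trans (cvg_app q (within_subset _ P0)) fdrv.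
have fge : \forall h \near 0, f a <= (f \o shift a) (h *: 1).
  move/nbhs0P: amin; apply: filterS => h.
  by rewrite /= [_ *: 1]mulr1 addrC.
apply/eqP; rewrite eq_le; apply/andP; split.
- rewrite /derive -/q cvg_at_leftE //; apply: limr_le.
    by apply: qcvg => h /lt_eqF ->.
  near=> h; apply: mulr_le0_ge0.
    rewrite invr_le0 ltW //; near: h; exact: nbhs_left_lt.
  rewrite subr_ge0; near: h; apply: cvg_within; exact: fge.
- rewrite /derive -/q cvg_at_rightE //; apply: limr_ge.
    by apply: qcvg => h /gt_eqF ->.
  near=> h; apply: mulr_ge0.
    rewrite invr_ge0 ltW //; near: h; exact: nbhs_right_gt.
  rewrite subr_ge0; near: h; apply: cvg_within; exact: fge.
Unshelve. all: by end_near. Qed.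

Lemma is_derive2_local_min f df a c :
  (\forall t \near a, f a <= f t) -> (\forall t \near a, is_derive t (1 : R) f (df t)) ->
  is_derive a 1 df c -> 0 <= c.
Proof.
move=> amin fd [dfdrv dfc]; rewrite leNgt; apply/negP => c0.
have df0 : df a = 0 := is_derive_local_min (nbhs_singleton fd) amin.
set q := fun h : R => h^-1 *: ((df \o shift a) (h *: 1) - df a).
have qc : q @ 0^' --> c by rewrite -dfc.
have : \forall h \near 0, [/\ h != 0 -> q h < 0, f a <= f (a + h)
                            & is_derive (a + h) 1 f (df (a + h))].
  have := cvgr_lt _ qc _ c0; rewrite near_withinE => qlt.
  near=> h; split; first by near: h; exact: qlt.
  - by near: h; move/nbhs0P: amin.
  - by near: h; move/nbhs0P: fd.
case/nbhs_ballP => r /= r0 near_a.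
have inball h : 0 <= h <= r / 2 -> ball 0 r h.
  move=> /andP[h0 hr]; rewrite /ball /= sub0r normrN ger0_norm //; lra.
have fdrv x : x \in `[a, a + r / 2] -> is_derive x 1 f (df x).
  rewrite in_itv /= => /andP[ax xb].
  have xa : 0 <= x - a <= r / 2 by apply/andP; split; lra.
  have [_ _] := near_a (x - a) (inball _ xa).
  by rewrite addrC subrK.
have ab : a < a + r / 2 by lra.
have [x xab fE] := MVT ab
  (fun x xI => fdrv x (subset_itv_oo_cc xI))
  (derivable_within_continuous (fun x xI => @ex_derive _ _ _ _ _ _ _ (fdrv x xI))).
move: xab; rewrite in_itv /= => /andP[ax xb].
have xa : 0 <= x - a <= r / 2 by apply/andP; split; lra.
have xa0 : x - a != 0 by rewrite subr_eq0 gt_eqF.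
have [/(_ xa0) + _ _] := near_a (x - a) (inball _ xa).
rewrite /q /= df0 subr0 [_ *: 1]mulr1 subrK pmulr_rlt0 ?invr_gt0 ?subr_gt0 // => dfx.
have r2 : 0 <= r / 2 <= r / 2 by apply/andP; split; lra.
have [_ + _] := near_a (r / 2) (inball _ r2).
rewrite -subr_ge0 fE; apply/negP; rewrite -ltNge pmulr_llt0 //; lra.
Unshelve. all: by end_near. Qed.

Lemma is_derive_scaled_local_min (sg : R) f a d : sg != 0 ->
  is_derive a 1 f d -> (\forall t \near a, sg * f a <= sg * f t) -> d = 0.
Proof.
move=> sg0 fd amin; have := is_derive_local_min (is_deriveZ sg fd) amin.
by move/eqP; rewrite scaler_eq0 (negbTE sg0) => /eqP.
Qed.

Lemma is_derive2_scaled_local_min (sg : R) f df a c :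
  (\forall t \near a, sg * f a <= sg * f t) ->
  (\forall t \near a, is_derive t (1 : R) f (df t)) ->
  is_derive a 1 df c -> 0 <= sg * c.
Proof.
move=> amin fd dfc; apply: (is_derive2_local_min amin _ (is_deriveZ sg dfc)).
by apply: filterS fd => t; exact: is_deriveZ.
Qed.

Lemma mean_value_bound f df b M :
  (forall s, `|s| <= `|b| -> is_derive s 1 f (df s) /\ `|df s| <= M) ->
  `|f b - f 0| <= M * `|b|.
Proof.
move=> fd.
have fcont x y : (forall s, s \in `[x, y] -> `|s| <= `|b|) ->
    {within `[x, y], continuous f}.
  move=> xy; apply: derivable_within_continuous => s /xy /fd [+ _].
  exact: @ex_derive _ _ _ _ _ _ _.
have [b0|b0] := leP 0 b.
  have sb s : s \in `[0, b] -> `|s| <= `|b|.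
    by rewrite in_itv /= => /andP[s0 sb]; rewrite !ger0_norm //; lra.
  have [c cI ->] := MVT_segment b0
    (fun x xI => (fd x (sb x (subset_itv_oo_cc xI))).1) (fcont _ _ sb).
  by rewrite normrM subr0 ler_wpM2r // (fd c (sb c cI)).2.
have sb s : s \in `[b, 0] -> `|s| <= `|b|.
  by rewrite in_itv /= => /andP[s0 sb]; rewrite !ler0_norm //; lra.
have [c cI E] := MVT_segment (ltW b0)
  (fun x xI => (fd x (sb x (subset_itv_oo_cc xI))).1) (fcont _ _ sb).
by rewrite distrC E normrM sub0r normrN ler_wpM2r // (fd c (sb c cI)).2.
Qed.

Lemma is_derive_affine (A B t : R) : is_derive t 1 (fun s : R => A + B * s) B.
Proof.
have -> : (fun s : R => A + B * s) = cst A + B \*: id by [].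
by apply: is_derive_eq; rewrite add0r [_ *: 1]mulr1.
Qed.

Lemma is_derive_quadratic (A B C t : R) :
  is_derive t 1 (fun s : R => A + B * s + C * s ^+ 2) (B + 2 * C * t).
Proof.
have -> : (fun s : R => A + B * s + C * s ^+ 2) = cst A + B \*: id + C \*: (id \* id).
  by apply/funext => s /=; rewrite expr2.
apply: is_derive_eq; rewrite /GRing.scale /= !mulr1 add0r; ring.
Qed.

Lemma is_derive_powR_comp (g : R -> R) (t dg p : R) : 0 < g t ->
  is_derive t 1 g dg -> is_derive t 1 (fun s => g s `^ p) (p * g t `^ (p - 1) * dg).
Proof.
move=> gt0 gd.
have pd : is_derive (g t) 1 (@powR R ^~ p) (p * g t `^ (p - 1)) := is_derive1_powR p gt0.
have gdrv : derivable g t 1 := @ex_derive _ _ _ _ _ _ _ gd.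
have pdrv : derivable (@powR R ^~ p) (g t) 1 := @ex_derive _ _ _ _ _ _ _ pd.
have -> : (fun s => g s `^ p) = (@powR R ^~ p) \o g by [].
split; first by apply/derivable1_diffP; apply: differentiable_comp; exact/derivable1_diffP.
rewrite -derive1E (derive1_comp gdrv pdrv) !derive1E.
by rewrite (@derive_val _ _ _ _ _ _ _ pd) (@derive_val _ _ _ _ _ _ _ gd).
Qed.

Lemma is_derive_scale_csub (g : R -> R) (c K t d : R) : is_derive t 1 g d ->
  is_derive t 1 (fun s => c * (K - g s)) (- (c * d)).
Proof.
move=> gd; have -> : (fun s => c * (K - g s)) = c \*: (cst K - g) by [].
by apply: is_derive_eq; rewrite sub0r /GRing.scale /= mulrN.
Qed.
End RealCalculus.

Section PartialDerivatives.
Context {R : realType} {n : nat}.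
Local Notation V := 'rV[R]_n.
Implicit Types (f : V -> R) (c u w z : V).

Lemma is_derive_line f c u (s : R) :
  derivable f (c + s *: u) u ->
  is_derive s 1 (fun t => f (c + t *: u)) ('D_u f (c + s *: u)).
Proof.
move=> fd.
have E : (fun h : R => h^-1 *: (f (c + (h *: 1 + s) *: u) - f (c + s *: u))) =
         (fun h => h^-1 *: (f (h *: u + (c + s *: u)) - f (c + s *: u))).
  apply/funext => h; congr (_ *: (f _ - _)).
  by rewrite [h *: 1]mulr1 scalerDl addrCA.
by split; rewrite /derivable /derive /= E.
Qed.

Lemma is_derive_partial_line f c (i : 'I_n) : derivable f c (ebasis i) ->
  is_derive (0 : R) 1 (fun t => f (c + t *: ebasis i)) (partial i f c).
Proof. by move=> fd; have := @is_derive_line f c (ebasis i) 0; rewrite scale0r addr0; apply. Qed.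

Definition trunc_vec w (k : nat) : V := \row_j (if (j < k)%N then w ord0 j else 0).

Lemma trunc_vec0 w : trunc_vec w 0 = 0.
Proof. by apply/rowP => j; rewrite !mxE. Qed.

Lemma trunc_vec_full w : trunc_vec w n = w.
Proof. by apply/rowP => j; rewrite !mxE ltn_ord. Qed.

Lemma trunc_vecS w (k : 'I_n) :
  trunc_vec w k.+1 = trunc_vec w k + w ord0 k *: ebasis k.
Proof.
apply/rowP => j; rewrite /ebasis !mxE eqxx /= ltnS leq_eqVlt.
have [->|jk] := eqVneq j k; first by rewrite eqxx ltnn mulr1 add0r.
by rewrite mulr0 addr0; move: jk; rewrite -val_eqE => /negbTE ->.
Qed.

Lemma coord_norm_le w (j : 'I_n) : `|w ord0 j| <= `|w|.
Proof.
rewrite [leRHS]/Num.Def.normr /= mx_normrE.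
exact: le_trans (le_bigmax _ _ (ord0, j)).
Qed.

Lemma norm_le_coords w (M : R) : 0 <= M -> (forall j, `|w ord0 j| <= M) -> `|w| <= M.
Proof.
move=> M0 wM; rewrite [leLHS]/Num.Def.normr /= mx_normrE.
by apply: bigmax_le => // -[i j] _; rewrite (ord1 i).
Qed.

Lemma norm_trunc_vec_step w (k : 'I_n) (h s : R) :
  `|s| <= `|h * w ord0 k| -> `|h *: trunc_vec w k + s *: ebasis k| <= `|h| * `|w|.
Proof.
move=> sk; apply: norm_le_coords => [|j]; first exact: mulr_ge0.
rewrite /ebasis !mxE eqxx /=.
have [->|jk] := eqVneq j k.
  rewrite ltnn mulr0 add0r mulr1.
  by apply: le_trans sk _; rewrite normrM ler_wpM2l // coord_norm_le.
rewrite mulr0 addr0.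
case: ifP => _; last by rewrite mulr0 normr0; exact: mulr_ge0.
by rewrite normrM ler_wpM2l // coord_norm_le.
Qed.

Lemma increment_along_basis f c (k : 'I_n) (b L E : R) :
  (forall s : R, `|s| <= `|b| -> derivable f (c + s *: ebasis k) (ebasis k) /\
     `|partial k f (c + s *: ebasis k) - L| <= E) ->
  `|f (c + b *: ebasis k) - f c - b * L| <= E * `|b|.
Proof.
move=> near_c.
have := @mean_value_bound _ (fun s => f (c + s *: ebasis k) - L * s)
  (fun s => partial k f (c + s *: ebasis k) - L) b E.
rewrite scale0r addr0 mulr0 subr0 [L * b]mulrC addrAC; apply => s /near_c [fd dfL].
split => //; have Ld : is_derive s 1 (L \*: id) L.
  by apply: is_derive_eq; rewrite [_ *: 1]mulr1.
exact: is_deriveB (is_derive_line fd) Ld.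
Qed.

Lemma telescope_trunc_vec f z w (h : R) :
  f (h *: w + z) - f z =
  \sum_(k < n) (f (z + h *: trunc_vec w k.+1) - f (z + h *: trunc_vec w k)).
Proof.
rewrite -(big_mkord xpredT (fun k => f (z + h *: trunc_vec w k.+1) - f (z + h *: trunc_vec w k))).
rewrite (telescope_sumr (fun k => f (z + h *: trunc_vec w k))) //.
by rewrite trunc_vec_full trunc_vec0 scaler0 addr0 [z + _]addrC.
Qed.

Lemma is_derive_partials f z w :
  (\forall x \near z, forall j, derivable f x (ebasis j)) ->
  (forall j, {for z, continuous (partial j f)}) ->
  is_derive z w f (\sum_j w ord0 j * partial j f z).
Proof.
move=> fdrv fcont; set L := \sum_j _.
suff qL : (fun h : R => h^-1 *: (f (h *: w + z) - f z)) @ 0^' --> L.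
  by split; [apply/cvg_ex; exists L | exact: cvg_lim qL].
apply/cvgrPdist_le => e e0.
set S := \sum_j `|w ord0 j|.
have S0 : 0 <= S by apply: sumr_ge0.
set E := e / (S + 1).
have E0 : 0 < E by apply: divr_gt0 => //; lra.
have ES : E * S <= e.
  rewrite /E mulrAC ler_pdivrMr; last lra.
  by rewrite ler_pM2l //; lra.
have [d /= d0 near_z] : exists2 d : R, 0 < d & forall x, ball z d x ->
    (forall j, derivable f x (ebasis j)) /\ (forall j, `|partial j f z - partial j f x| <= E).
  apply/nbhs_ballP; near=> x; split; first by near: x.
  near: x; apply: filter_forall => j.
  exact: (cvgrPdist_le _ _).1 (fcont j) E E0.
have w0 : 0 <= `|w| by [].
near=> h.
have hd : `|h| < d / (`|w| + 1) by near: h; apply: dnbhs0_lt; apply: divr_gt0 => //; lra.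
have h0 : h != 0 by near: h; exact: nbhs_dnbhs_neq.
have hw : `|h| * `|w| < d.
  move: hd; rewrite ltr_pdivlMr; last lra.
  by apply: le_lt_trans; rewrite ler_wpM2l //; lra.
have step (k : 'I_n) : `|f (z + h *: trunc_vec w k.+1) - f (z + h *: trunc_vec w k)
    - h * w ord0 k * partial k f z| <= E * (`|h| * `|w ord0 k|).
  rewrite trunc_vecS scalerDr scalerA addrA -normrM.
  apply: increment_along_basis => s sk.
  have /near_z [fd fE] : ball z d (z + h *: trunc_vec w k + s *: ebasis k).
    rewrite -ball_normE /ball_ /= -addrA opprD addrA subrr add0r normrN.
    exact: le_lt_trans (norm_trunc_vec_step sk) hw.
  by split; [exact: fd | rewrite distrC].
have incr : `|f (h *: w + z) - f z - h * L| <= E * (`|h| * S).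
  rewrite telescope_trunc_vec /L mulr_sumr -sumrB.
  apply: le_trans (ler_norm_sum _ _ _) _.
  rewrite /S !mulr_sumr; apply: ler_sum => k _.
  by rewrite mulrA step.
rewrite -[X in X - _](mulKf h0) -mulrBr normrM normfV distrC.
rewrite ler_pdivrMl ?normr_gt0 //.
by apply: le_trans incr _; rewrite mulrCA ler_wpM2l.
Unshelve. all: by end_near.
Qed.
End PartialDerivatives.

Section Lines.
Context {R : realType} {n : nat}.
Local Notation V := 'rV[R]_n.

Lemma near_line (P : V -> Prop) (y w : V) :
  (\forall x \near y, P x) -> \forall t \near (0 : R), P (y + t *: w).
Proof.
move/nbhs_ballP => [d d0 yP]; apply/nbhs_ballP.
have w0 : 0 <= `|w| by [].
exists (d / (`|w| + 1)); first by apply: divr_gt0 => //; lra.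
move=> t; rewrite -ball_normE /ball_ /= sub0r normrN => td; apply: yP.
rewrite -ball_normE /ball_ /= opprD addrA subrr add0r normrN normrZ.
move: td; rewrite ltr_pdivlMr; last lra.
by apply: le_lt_trans; rewrite ler_wpM2l //; lra.
Qed.

Lemma local_min_line (sg : R) (F : V -> R) (y w : V) :
  (\forall x \near y, sg * F y <= sg * F x) ->
  \forall t \near (0 : R), sg * F (y + 0 *: w) <= sg * F (y + t *: w).
Proof. by move/(near_line w); apply: filterS => t; rewrite scale0r addr0. Qed.
End Lines.

Section C2Lines.
Context {R : realType} {n : nat}.
Local Notation V := 'rV[R]_n.
Variables (O : set V) (phi : V -> R).
Hypotheses (oO : open O) (phiC2 : C2_on O phi).

Lemma continuous_within_open_at (g : V -> R) (z : V) : O z ->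
  {within O, continuous g} -> {for z, continuous g}.
Proof. by move=> Oz; rewrite continuous_open_subspace // => /(_ z); apply; rewrite inE. Qed.

Lemma C2_is_derive_partials (y w : V) : O y ->
  is_derive y w phi (\sum_j w ord0 j * partial j phi y).
Proof.
move=> Oy; have [_ phid] := phiC2; apply: is_derive_partials => [|j].
  by apply: filterS (open_nbhs_nbhs (conj oO Oy)) => x Ox j; exact: (phid j).1.
by apply: continuous_within_open_at Oy _; exact: (phid j).2.1.
Qed.

Lemma C2_is_derive_line (y w : V) : O y ->
  \forall t \near (0 : R), is_derive t (1 : R) (fun t => phi (y + t *: w))
    (\sum_j w ord0 j * partial j phi (y + t *: w)).
Proof.
move=> Oy; apply: filterS (near_line w (open_nbhs_nbhs (conj oO Oy))) => t Ot.
have phid := C2_is_derive_partials w Ot.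
rewrite -(@derive_val _ _ _ _ _ _ _ phid).
exact: is_derive_line (@ex_derive _ _ _ _ _ _ _ phid).
Qed.

Lemma C2_is_derive2_line (y w : V) : O y ->
  is_derive (0 : R) 1 (fun t => \sum_j w ord0 j * partial j phi (y + t *: w))
    (\sum_j w ord0 j * \sum_i w ord0 i * partial i (partial j phi) y).
Proof.
move=> Oy; have [_ phid] := phiC2.
rewrite -fct_sumE; apply: is_derive_sum => j; apply: is_deriveZ.
have pd : is_derive y w (partial j phi) (\sum_i w ord0 i * partial i (partial j phi) y).
  apply: is_derive_partials => [|i].
    by apply: filterS (open_nbhs_nbhs (conj oO Oy)) => x Ox i; exact: ((phid j).2.2 i).1.
  by apply: continuous_within_open_at Oy _; exact: ((phid j).2.2 i).2.
have := @is_derive_line _ _ (partial j phi) y w 0; rewrite scale0r addr0.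
by rewrite -(@derive_val _ _ _ _ _ _ _ pd); apply; exact: @ex_derive _ _ _ _ _ _ _ pd.
Qed.
End C2Lines.

Section CubeRootPowers.
Context {R : realType}.
Implicit Types (e t : R).

Lemma norm_powR43E t : `|t| `^ (4/3) = `|t| * `|t| `^ 3^-1.
Proof. by rewrite -mulr_powRB1 //; congr (_ * _ `^ _); field. Qed.

Lemma norm_cbrtK t : (`|t| `^ 3^-1) ^+ 3 = `|t|.
Proof. by rewrite -powR_mulrn ?powR_ge0 // -powRrM mulVf ?pnatr_eq0 // powRr1. Qed.

Lemma near0_norm_cbrt_le e : 0 < e -> \forall t \near (0 : R), `|t| `^ 3^-1 <= e.
Proof.
move=> e0; apply/nbhs_ballP; exists (e ^+ 3); first exact: exprn_gt0.
move=> t; rewrite -ball_normE /ball_ /= sub0r normrN => te.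
have -> : e = (e ^+ 3) `^ 3^-1.
  by rewrite -powR_mulrn ?ltW // -powRrM mulfV ?pnatr_eq0 // powRr1 // ltW.
apply: ge0_ler_powR; rewrite ?invr_ge0 ?ler0n ?nnegrE ?normr_ge0 ?ltW //.
exact: exprn_gt0.
Qed.

Lemma is_derive0_norm_powR43 : is_derive (0 : R) 1 (fun t : R => `|t| `^ (4/3)) 0.
Proof.
set g := fun t : R => `|t| `^ (4/3).
suff q0 : (fun h : R => h^-1 *: (g (h *: 1 + 0) - g 0)) @ 0^' --> 0.
  by split; [apply/cvg_ex; exists 0 | exact: cvg_lim q0].
apply/cvgrPdist_le => e e0; near=> h.
have h0 : h != 0 by near: h; exact: nbhs_dnbhs_neq.
rewrite /g normr0 powR0 ?gt_eqF // subr0 addr0 [h *: 1]mulr1 sub0r normrN.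
rewrite norm_powR43E normrM normrM normfV normr_id mulKf ?normr_eq0 //.
rewrite norm_powR ?normr_ge0 // normr_id.
by near: h; apply: cvg_within; exact: near0_norm_cbrt_le.
Unshelve. all: by end_near.
Qed.

Lemma near0_sqr_le_norm_powR43 (K c : R) : 0 < K -> 0 < c ->
  \forall t \near (0 : R), K * t ^+ 2 <= c * `|t| `^ (4/3).
Proof.
move=> K0 c0; near=> t.
have u1 : `|t| `^ 3^-1 <= 1 by near: t; exact: near0_norm_cbrt_le.
have uc : K * `|t| `^ 3^-1 <= c.
  by rewrite mulrC -ler_pdivlMr //; near: t; apply: near0_norm_cbrt_le; exact: divr_gt0.
set u := `|t| `^ 3^-1 in u1 uc *.
have u0 : 0 <= u by exact: powR_ge0.
have tE : t ^+ 2 = u ^+ 2 * u ^+ 4.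
  by rewrite -real_normK ?num_real // -norm_cbrtK -exprM -exprD.
have t43E : `|t| `^ (4/3) = u ^+ 4 by rewrite norm_powR43E -{1}norm_cbrtK -exprSr.
rewrite tE t43E mulrA ler_wpM2r ?exprn_ge0 //.
apply: le_trans uc; rewrite expr2 mulrA ler_piMr //.
exact: mulr_ge0 (ltW K0) u0.
Unshelve. all: by end_near.
Qed.

Lemma continuous_norm_powR (p u : R) : 0 < p -> {for u, continuous (fun v : R => `|v| `^ p)}.
Proof.
move=> p0; have [->|u0] := eqVneq u 0.
  apply/cvgrPdist_le => e e0; rewrite normr0 powR0 ?gt_eqF //.
  exists (e `^ p^-1); first exact: powR_gt0.
  move=> v; rewrite /ball_ /= !sub0r !normrN norm_powR ?normr_ge0 // normr_id => ve.
  have -> : e = (e `^ p^-1) `^ p by rewrite -powRrM mulVf ?gt_eqF // powRr1 // ltW.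
  by apply: ge0_ler_powR; rewrite ?nnegrE ?normr_ge0 ?powR_ge0 ?ltW.
have nu : 0 < `|u| by rewrite normr_gt0.
have pd := @is_derive1_powR R p `|u| nu.
have pcont : {for `|u|, continuous (@powR R ^~ p)}.
  apply: differentiable_continuous; apply/derivable1_diffP.
  exact: @ex_derive _ _ _ _ _ _ _ pd.
exact: continuous_comp (@norm_continuous _ R^o u) pcont.
Qed.
End CubeRootPowers.

Section Quadratics.
Context {R : realType}.
Implicit Types (A B C s t : R).

Definition quad A B C t := A + 2 * B * t + C * t ^+ 2.

Definition dquad_pow23 A B C t := 2/3 * quad A B C t `^ (2/3 - 1) * (2 * B + 2 * C * t).

Lemma quad0 A B C : quad A B C 0 = A.
Proof. by rewrite /quad mulr0 expr0n /= mulr0 !addr0. Qed.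

Lemma near0_quad_gt0 A B C : 0 < A -> 0 <= C -> \forall t \near 0, 0 < quad A B C t.
Proof.
move=> A0 C0; apply/nbhs_ballP.
have B0 : 0 <= `|B| by [].
exists (A / (2 * `|B| + 1)); first by apply: divr_gt0 => //; lra.
move=> t; rewrite -ball_normE /ball_ /= sub0r normrN ltr_pdivlMr; last lra.
have := ler_norm (- (B * t)); rewrite normrN normrM.
have : 0 <= C * t ^+ 2 by rewrite mulr_ge0 ?sqr_ge0.
have : 0 <= `|t| by [].
rewrite /quad; nra.
Qed.

Lemma is_derive_quad_pow23 A B C t : 0 < quad A B C t ->
  is_derive t 1 (fun s => quad A B C s `^ (2/3)) (dquad_pow23 A B C t).
Proof. by move=> qt; exact: is_derive_powR_comp qt (is_derive_quadratic _ _ _ _). Qed.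

Lemma is_derive0_dquad_pow23 A B C : 0 < A ->
  is_derive (0 : R) 1 (dquad_pow23 A B C)
   (2/3 * A `^ (2/3 - 1) * (2 * C) +
    2 * B * (2/3 * ((2/3 - 1) * A `^ (2/3 - 1 - 1) * (2 * B)))).
Proof.
move=> A0; have q0 : 0 < quad A B C 0 by rewrite quad0.
have qd := is_derive_powR_comp (2/3 - 1) q0 (is_derive_quadratic A (2 * B) C 0).
have ld := is_derive_affine (2 * B) (2 * C) 0.
have -> : dquad_pow23 A B C =
    (2/3) \*: (fun s => quad A B C s `^ (2/3 - 1)) * (fun s => 2 * B + 2 * C * s).
  by apply/funext.
apply: is_derive_eq (is_deriveM (is_deriveZ (2/3) qd) ld) _.
by rewrite /GRing.scale /= quad0 !mulr0 !addr0.
Qed.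

Lemma cbrt_powRE A : 0 < A -> let s := A `^ 3^-1 in
  [/\ 0 < s, A = s ^+ 3, A `^ (2/3 - 1) = s^-1 & A `^ (2/3 - 1 - 1) = (s ^+ 4)^-1].
Proof.
move=> A0 s; have sE (k : nat) : A `^ (3^-1 * k%:R) = s ^+ k.
  by rewrite powRrM powR_mulrn // powR_ge0.
split; first exact: powR_gt0.
- by rewrite -sE mulVf ?pnatr_eq0 // powRr1 // ltW.
- by rewrite (_ : 2/3 - 1 = - (3^-1 * 1%:R)) ?powRN ?sE ?expr1 //; field.
- by rewrite (_ : 2/3 - 1 - 1 = - (3^-1 * 4%:R)) ?powRN ?sE //; field.
Qed.

(* With [A = |y - x0|^2] and [grad v(y) = k (y - x0)], the left-hand side is
   [- Delta_oo v(y)] for [v = c0 (K - |. - x0|^(4/3))]. *)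
Lemma aronsson_gradient_curvature (c0 A k : R) : 0 < A -> c0 ^+ 3 = 81/64 ->
  k = - (4/3) * c0 / A `^ 3^-1 ->
  c0 * (2/3 * A `^ (2/3 - 1) * (2 * (k ^+ 2 * A)) +
        2 * (k * A) * (2/3 * ((2/3 - 1) * A `^ (2/3 - 1 - 1) * (2 * (k * A))))) = 1.
Proof.
move=> A0 c03 ->; have [+ + p1 p4] := cbrt_powRE A0.
rewrite p1 p4; move: (A `^ 3^-1) => s s0 ->.
apply: (@eq_trans _ _ (64/81 * c0 ^+ 3)); last by rewrite c03; field.
by field; rewrite gt_eqF.
Qed.
End Quadratics.

Section SquaredNorm.
Context {R : realType} {n : nat}.
Local Notation V := 'rV[R]_n.
Implicit Types (a w : V) (k t : R).

Definition sqnorm a : R := \sum_i a ord0 i ^+ 2.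

Definition dotv a w : R := \sum_i a ord0 i * w ord0 i.

Lemma sqnorm_ge0 a : 0 <= sqnorm a.
Proof. by apply: sumr_ge0 => i _; exact: sqr_ge0. Qed.

Lemma sqnorm_gt0 a : a != 0 -> 0 < sqnorm a.
Proof.
move=> a0; rewrite lt_def sqnorm_ge0 andbT; apply: contra a0 => /eqP a2.
apply/eqP/rowP => i; rewrite mxE; apply/eqP; rewrite -sqrf_eq0.
exact/eqP/(psumr_eq0P (fun j _ => sqr_ge0 (a ord0 j)) a2).
Qed.

Lemma dotv_ebasis a (i : 'I_n) : dotv a (ebasis i) = a ord0 i.
Proof.
rewrite /dotv (bigD1 i) //= big1 => [|j ji]; first by rewrite /ebasis mxE !eqxx mulr1 addr0.
by rewrite /ebasis mxE eqxx (negbTE ji) mulr0.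
Qed.

Lemma dotv_scale a k : dotv a (k *: a) = k * sqnorm a.
Proof. by rewrite /dotv /sqnorm mulr_sumr; apply: eq_bigr => i _; rewrite mxE; ring. Qed.

Lemma sqnorm_scale a k : sqnorm (k *: a) = k ^+ 2 * sqnorm a.
Proof. by rewrite /sqnorm mulr_sumr; apply: eq_bigr => i _; rewrite mxE; ring. Qed.

Lemma sqnorm_line a w t : sqnorm (a + t *: w) = quad (sqnorm a) (dotv a w) (sqnorm w) t.
Proof.
have E i : ((a + t *: w) ord0 i) ^+ 2 =
    a ord0 i ^+ 2 + 2 * t * (a ord0 i * w ord0 i) + t ^+ 2 * w ord0 i ^+ 2.
  by rewrite !mxE; ring.
rewrite /sqnorm (eq_bigr _ (fun i _ => E i)) !big_split /= -!mulr_sumr /quad /dotv; ring.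
Qed.

Lemma enorm_powR43 a : enorm a `^ (4/3) = sqnorm a `^ (2/3).
Proof.
rewrite /enorm -powR12_sqrt ?sqnorm_ge0 // -powRrM.
by congr (_ `^ _); field.
Qed.

Lemma enorm_scale_ebasis t (i : 'I_n) : enorm (t *: (ebasis i : V)) = `|t|.
Proof.
rewrite /enorm (bigD1 i) //= big1 => [|j ji].
  by rewrite addr0 /ebasis !mxE !eqxx mulr1 sqrtr_sqr.
by rewrite /ebasis !mxE eqxx (negbTE ji) mulr0 expr0n.
Qed.

Lemma continuous_sqnorm : continuous (sqnorm : V -> R).
Proof.
have -> : sqnorm = \sum_i (fun x : V => x ord0 i * x ord0 i).
  by apply/funext => x; rewrite fct_sumE; apply: eq_bigr => i _; rewrite expr2.
move=> x; elim/big_ind : _ => [|f g fc gc|i _]; first exact: cst_continuous.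
  exact: continuousD.
have xi_cont : {for x, continuous (fun y : V => y ord0 i)} by exact: coord_continuous.
exact: (continuousM xi_cont xi_cont).
Qed.
End SquaredNorm.

Section AronssonProfile.
Context {R : realType} {n : nat}.
Local Notation V := 'rV[R]_n.
Variables (c0 K : R) (x0 : V).

Definition aronsson (x : V) : R := c0 * (K - enorm (x - x0) `^ (4/3)).

Lemma aronsson_line (y w : V) (t : R) : aronsson (y + t *: w) =
  c0 * (K - quad (sqnorm (y - x0)) (dotv (y - x0) w) (sqnorm w) t `^ (2/3)).
Proof. by rewrite /aronsson addrAC enorm_powR43 sqnorm_line. Qed.

Lemma aronsson_ebasis (i : 'I_n) (t : R) :
  aronsson (x0 + t *: ebasis i) = c0 * (K - `|t| `^ (4/3)).
Proof. by rewrite /aronsson addrAC subrr add0r enorm_scale_ebasis. Qed.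

Lemma continuous_aronsson : continuous aronsson.
Proof.
have -> : aronsson =
    cst c0 \* ((cst K - fun s : R => `|s| `^ (2/3)) \o fun x => sqnorm (x - x0)).
  apply/funext => x.
  by rewrite /aronsson enorm_powR43 -(ger0_norm (sqnorm_ge0 (x - x0))).
move=> x; apply: continuousM; first exact: cst_continuous.
apply: continuous_comp.
  apply: (@continuous_comp _ _ _ (fun x : V => x - x0) sqnorm); last exact: continuous_sqnorm.
  exact: (cvgB cvg_id (cvg_cst x0)).
apply: continuousB; first exact: cst_continuous.
by apply: continuous_norm_powR; lra.
Qed.

Lemma is_derive_aronsson_line (y w : V) : y != x0 ->
  \forall t \near (0 : R), is_derive t (1 : R) (fun t => aronsson (y + t *: w))
    (- (c0 * dquad_pow23 (sqnorm (y - x0)) (dotv (y - x0) w) (sqnorm w) t)).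
Proof.
move=> yx0; have A0 : 0 < sqnorm (y - x0) by rewrite sqnorm_gt0 // subr_eq0.
apply: filterS (near0_quad_gt0 (dotv (y - x0) w) A0 (sqnorm_ge0 w)) => t qt.
have -> : (fun t => aronsson (y + t *: w)) =
    (fun t => c0 * (K - quad (sqnorm (y - x0)) (dotv (y - x0) w) (sqnorm w) t `^ (2/3))).
  by apply/funext => s; rewrite aronsson_line.
exact: is_derive_scale_csub (is_derive_quad_pow23 qt).
Qed.

Lemma inf_laplacian_gradE (phi : V -> R) (y : V) :
  \sum_j (\row_i partial i phi y : V) ord0 j *
     \sum_i (\row_i partial i phi y : V) ord0 i * partial i (partial j phi) y =
  inf_laplacian phi y.
Proof.
rewrite /inf_laplacian; apply: eq_bigr => j _; rewrite mulr_sumr.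
by apply: eq_bigr => i _; rewrite !mxE; ring.
Qed.

Section Touching.
Variables (O : set V) (phi : V -> R).
Hypotheses (oO : open O) (phiC2 : C2_on O phi).

(* [sg = 1] encodes touching from below, [sg = -1] touching from above. *)
Lemma aronsson_touch_grad (sg : R) (y : V) : O y -> sg != 0 -> y != x0 ->
  (\forall x \near y, sg * (phi y - aronsson y) <= sg * (phi x - aronsson x)) ->
  forall i, partial i phi y = - (4/3) * c0 / sqnorm (y - x0) `^ 3^-1 * (y - x0) ord0 i.
Proof.
move=> Oy sg0 yx0 touch i.
have A0 : 0 < sqnorm (y - x0) by rewrite sqnorm_gt0 // subr_eq0.
have [s0 _ p1 _] := cbrt_powRE A0.
have phid := is_derive_partial_line ((phiC2.2 i).1 y Oy).
have vd := nbhs_singleton (is_derive_aronsson_line (ebasis i) yx0).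
have := is_derive_scaled_local_min sg0 (is_deriveB phid vd) (local_min_line (ebasis i) touch).
rewrite /dquad_pow23 quad0 p1 dotv_ebasis mulr0 addr0 opprK => /eqP.
by rewrite addr_eq0 => /eqP ->; field; rewrite gt_eqF.
Qed.

Lemma aronsson_touch_inf_laplacian (sg : R) (y : V) :
  O y -> sg != 0 -> y != x0 -> c0 ^+ 3 = 81/64 ->
  (\forall x \near y, sg * (phi y - aronsson y) <= sg * (phi x - aronsson x)) ->
  0 <= sg * (inf_laplacian phi y + 1).
Proof.
move=> Oy sg0 yx0 c03 touch.
have A0 : 0 < sqnorm (y - x0) by rewrite sqnorm_gt0 // subr_eq0.
set g : V := \row_i partial i phi y.
set k := - (4/3) * c0 / sqnorm (y - x0) `^ 3^-1.
have gE : g = k *: (y - x0).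
  by apply/rowP => i; rewrite mxE (aronsson_touch_grad Oy sg0 yx0 touch) !mxE.
have vd := is_derive_aronsson_line g yx0.
have d1 : \forall t \near (0 : R), is_derive t (1 : R)
    (fun t => phi (y + t *: g) - aronsson (y + t *: g))
    (\sum_j g ord0 j * partial j phi (y + t *: g) -
     - (c0 * dquad_pow23 (sqnorm (y - x0)) (dotv (y - x0) g) (sqnorm g) t)).
  near=> t; apply: is_deriveB; first by near: t; exact: (C2_is_derive_line oO phiC2 g Oy).
  by near: t; exact: vd.
have d2 := is_deriveB (C2_is_derive2_line oO phiC2 g Oy)
  (is_deriveN (is_deriveZ c0 (is_derive0_dquad_pow23 (dotv (y - x0) g) (sqnorm g) A0))).
have := is_derive2_scaled_local_min (local_min_line g touch) d1 d2.
rewrite inf_laplacian_gradE gE dotv_scale sqnorm_scale /GRing.scale /= opprK.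
by rewrite (aronsson_gradient_curvature A0 c03 erefl).
Unshelve. all: by end_near.
Qed.

Lemma aronsson_touch_center_grad (sg : R) : O x0 -> sg != 0 ->
  (\forall x \near x0, sg * (phi x0 - aronsson x0) <= sg * (phi x - aronsson x)) ->
  forall i, partial i phi x0 = 0.
Proof.
move=> Ox0 sg0 touch i.
have phid := is_derive_partial_line ((phiC2.2 i).1 x0 Ox0).
have vd : is_derive (0 : R) 1 (fun t => aronsson (x0 + t *: ebasis i)) (- (c0 * 0)).
  have -> : (fun t => aronsson (x0 + t *: ebasis i)) = (fun t => c0 * (K - `|t| `^ (4/3))).
    by apply/funext => t; rewrite aronsson_ebasis.
  exact: is_derive_scale_csub is_derive0_norm_powR43.
have := is_derive_scaled_local_min sg0 (is_deriveB phid vd) (local_min_line _ touch).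
by rewrite mulr0 oppr0 subr0.
Qed.

Lemma aronsson_center_no_touch_above : (0 < n)%N -> O x0 -> 0 < c0 ->
  ~ (\forall x \near x0, phi x - aronsson x <= phi x0 - aronsson x0).
Proof.
move=> n0 Ox0 c00 touch.
set i := Ordinal n0; set M := partial i (partial i phi) x0.
set L := (`|M| + 1) / 2.
(* [t |-> - phi (x0 + t e_i) - L t^2] has a local minimum at 0 although its
   second derivative there, [- M - 2 L], is negative. *)
have L0 : 0 < L by rewrite /L; have := normr_ge0 M; lra.
have d1 : \forall t \near (0 : R), is_derive t (1 : R)
    (fun t => - phi (x0 + t *: ebasis i) - (0 + 0 * t + L * t ^+ 2))
    (- partial i phi (x0 + t *: ebasis i) - (0 + 2 * L * t)).
  apply: filterS (near_line (ebasis i) (open_nbhs_nbhs (conj oO Ox0))) => t Ot.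
  apply: is_deriveB _ (is_derive_quadratic _ _ _ _); apply: is_deriveN.
  exact: is_derive_line ((phiC2.2 i).1 _ Ot).
have d2 := is_deriveB (is_deriveN (is_derive_partial_line (((phiC2.2 i).2.2 i).1 x0 Ox0)))
  (is_derive_affine 0 (2 * L) 0).
have v0 : aronsson x0 = c0 * K.
  by have := aronsson_ebasis i 0; rewrite scale0r addr0 normr0 powR0 ?subr0.
have tmin : \forall t \near (0 : R),
    - phi (x0 + 0 *: ebasis i) - (0 + 0 * 0 + L * 0 ^+ 2) <=
    - phi (x0 + t *: ebasis i) - (0 + 0 * t + L * t ^+ 2).
  near=> t.
  have h1 : phi (x0 + t *: ebasis i) - aronsson (x0 + t *: ebasis i) <=
      phi x0 - aronsson x0 by near: t; exact: (near_line (ebasis i) touch).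
  have h2 : L * t ^+ 2 <= c0 * `|t| `^ (4/3).
    by near: t; exact: near0_sqr_le_norm_powR43.
  move: h1; rewrite aronsson_ebasis v0 scale0r addr0 expr0n /= !mulr0 !mul0r !add0r.
  lra.
have := is_derive2_local_min tmin d1 d2.
rewrite -/M; have := ler_norm (- M); rewrite normrN /L; lra.
Unshelve. all: by end_near.
Qed.
End Touching.

Lemma aronsson_visc_solution (O : set V) : (0 < n)%N -> open O -> 0 < c0 ->
  c0 ^+ 3 = 81/64 -> visc_solution O aronsson.
Proof.
move=> n0 oO c00 c03; split; first exact/continuous_subspaceT/continuous_aronsson.
split=> phi y Oy phiC2 touch.
- have touch1 : \forall x \near y, 1 * (phi y - aronsson y) <= 1 * (phi x - aronsson x).
    by apply: filterS touch => x; rewrite !mul1r.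
  have [yx0|yx0] := eqVneq y x0.
    subst y; rewrite /inf_laplacian big1 ?oppr0 // => i _; rewrite big1 // => j _.
    by rewrite (aronsson_touch_center_grad phiC2 Oy (oner_neq0 R) touch1) mulr0 mul0r.
  have := aronsson_touch_inf_laplacian oO phiC2 Oy (oner_neq0 R) yx0 c03 touch1.
  by rewrite mul1r; lra.
- have [yx0|yx0] := eqVneq y x0.
    by subst y; case: (aronsson_center_no_touch_above oO phiC2 n0 Oy c00 touch).
  have touchN1 : \forall x \near y, -1 * (phi y - aronsson y) <= -1 * (phi x - aronsson x).
    by apply: filterS touch => x; rewrite !mulN1r lerN2.
  have N10 : (-1 : R) != 0 by rewrite oppr_eq0 oner_neq0.
  have := aronsson_touch_inf_laplacian oO phiC2 Oy N10 yx0 c03 touchN1.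
  by rewrite mulN1r; lra.
Qed.
End AronssonProfile.

Lemma aronsson_constant_cube (R : realType) : (3 `^ (4 / 3) / 4 : R) ^+ 3 = 81 / 64.
Proof.
rewrite exprMn -powR_mulrn ?powR_ge0 // -powRrM.
rewrite (_ : 4 / 3 * 3%:R = 4%:R) ?powR_mulrn; [by field | lra | by field].
Qed.

Theorem lemma4 (R : realType) (n : nat) (Omega : set 'rV[R]_n) (x0 : 'rV[R]_n) :
  (0 < n)%N ->
  open Omega -> bounded_set Omega -> connected Omega ->
  Omega x0 -> dist_bd Omega x0 = rho Omega ->
  visc_solution Omega
    (fun x => (3 `^ (4 / 3) / 4) *
              (rho Omega `^ (4 / 3) - enorm (x - x0) `^ (4 / 3))).
Proof.
move=> n0 oO _ _ _ _.
have c0_gt0 : 0 < (3 `^ (4 / 3) / 4 : R) by apply: divr_gt0; [exact: powR_gt0 | lra].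
exact: (@aronsson_visc_solution R n _ (rho Omega `^ (4 / 3)) x0 Omega n0 oO c0_gt0
  (aronsson_constant_cube R)).
Qed.
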